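(* Consider Algorithm 3 (see context) run on any arrival sequence, and let $C_{\min}=\min_l C_l$. Whenever a packet $m$ is scheduled, let $\Delta D$ be the resulting increase in the dual objective $\sum_{m'}\alpha_{m'}+\sum_{l,t}C_l\beta_{lt}$, which increases by $\alpha_m$ plus the changes in $C_l\beta_{lt}$ for $(l,t)\in k^*$. The corresponding increase of the primal objective $\sum_{m,k}X_{mk}$ is $1$. Then $$\Delta D\le 2(\ln L+1)+\frac{B}{C_{\min}},$$ where $B<\infty$ is a constant that depends on $L$ but not on $C_{\min}$.
   Context: Network model. The network is a directed graph with a finite set $\mathcal L$ of links. Each link $l$ has an integer capacity $C_l\ge1$ (packets per time slot). Time is slotted, $t=1,2,\dots$. $\mathcal M$ is a finite set of packets. Packet $m$ has a source node $s_m$, a destination node $\mathrm{dst}_m$, an arrival slot $a_m$ and a deadline slot $f_m$. Valid schedules. A valid schedule for $m$ is a set $k=\{(l_1,t_1),\dots,(l_j,t_j)\}$ of (link, slot) pairs satisfying two conditions: $l_1,\dots,l_j$ form a directed path from $s_m$ to $\mathrm{dst}_m$, and $a_m\le t_1<t_2<\dots<t_j\le f_m$. $V(m)$ denotes the set of valid schedules of $m$. $L\ge1$ is an integer with $|k|\le L$ for all $m\in\mathcal M$, $k\in V(m)$. Define the function $$g_L(x)=\begin{cases}\dfrac{e^{x}-1}{L\,(e^{1/(\ln L+1)}-1)}, & 0\le x\le \frac{1}{\ln L+1},\\[2mm] e^{(x-1)(\ln L+1)}, & x\ge\frac{1}{\ln L+1}.\end{cases}$$ Algorithm 3. 1. Initialize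 all $\alpha_m,X_{mk}$ to $0$. For each link $l$ and slot $t$, let $n_{lt}$ be the number of packets scheduled so far on $(l,t)$ (initially $0$), and maintain $\beta_{lt}=g_L(n_{lt}/C_l)$ (initially $0$). 2. For each arriving packet $m$ in order: - Let $k^*\in\arg\max_{k\in V(m)}\big(1-\sum_{(l,t)\in k}\beta_{lt}\big)$. - If $1-\sum_{(l,t)\in k^*}\beta_{lt}>0$, do the following. Set $\alpha_m=1-\sum_{(l,t)\in k^*}\beta_{lt}$, using current values. For each $(l,t)\in k^*$ increment $n_{lt}$ by one and reset $\beta_{lt}=g_L(n_{lt}/C_l)$. Set $X_{mk^*}=1$, and transmit $m$ along $k^*$. - Otherwise, drop $m$. *)

From Stdlib Require Import Reals List Arith.
Import ListNotations.
Open Scope R_scope.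

Record Network := {
  links : list nat;
  lsrc  : nat -> nat;
  ldst  : nat -> nat;
  cap   : nat -> nat
}.

Record Packet := {
  psrc  : nat;
  pdst  : nat;
  parr  : nat;
  pdead : nat
}.

(* A schedule: the (link, slot) pairs listed in path order. *)
Definition Sched := list (nat * nat).

Definition valid_schedule (net : Network) (m : Packet) (k : Sched) : Prop :=
  k <> [] /\
  Forall (fun p => In (fst p) (links net)) k /\
  lsrc net (fst (nth 0 k (0%nat,0%nat))) = psrc m /\
  ldst net (fst (last k (0%nat,0%nat))) = pdst m /\
  (forall i, (S i < length k)%nat ->
     ldst net (fst (nth i k (0%nat,0%nat))) = lsrc net (fst (nth (S i) k (0%nat,0%nat)))) /\
  (* directed path: no repeated vertices *)
  NoDup (lsrc net (fst (nth 0 k (0%nat,0%nat))) :: map (fun p => ldst net (fst p)) k) /\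
  (parr m <= snd (nth 0 k (0%nat,0%nat)))%nat /\
  (forall i, (S i < length k)%nat ->
     (snd (nth i k (0%nat,0%nat)) < snd (nth (S i) k (0%nat,0%nat)))%nat) /\
  (snd (last k (0%nat,0%nat)) <= pdead m)%nat.

Definition gL (L : nat) (x : R) : R :=
  let c := 1 / (ln (INR L) + 1) in
  if Rle_dec x c then (exp x - 1) / (INR L * (exp c - 1))
  else exp ((x - 1) * (ln (INR L) + 1)).

(* Algorithm state: n_{lt} = number of packets scheduled on (l,t). *)
Definition State := nat -> nat -> nat.

Definition state0 : State := fun _ _ => 0%nat.

Definition beta (net : Network) (L : nat) (n : State) (l t : nat) : R :=
  gL L (INR (n l t) / INR (cap net l)).

Definition sum_beta (net : Network) (L : nat) (n : State) (k : Sched) : R :=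
  fold_right (fun p acc => beta net L n (fst p) (snd p) + acc) 0 k.

Definition pair_eq_dec : forall x y : nat * nat, {x = y} + {x <> y}.
Proof. decide equality; apply Nat.eq_dec. Defined.

Definition incr (k : Sched) (n : State) : State :=
  fun l t => (n l t + count_occ pair_eq_dec k (l, t))%nat.

Inductive alg_step (net : Network) (L : nat) (n : State) (m : Packet)
  : State -> option Sched -> Prop :=
| step_sched (k : Sched) :
    valid_schedule net m k ->
    (forall k', valid_schedule net m k' ->
       1 - sum_beta net L n k' <= 1 - sum_beta net L n k) ->
    0 < 1 - sum_beta net L n k ->
    alg_step net L n m (incr k n) (Some k)
| step_drop :
    (forall k', valid_schedule net m k' -> 1 - sum_beta net L n k' <= 0) ->
    alg_step net L n m n None.

Inductive alg_run (net : Network) (L : nat) : list Packet -> State -> Prop :=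
| run_nil : alg_run net L [] state0
| run_snoc (ms : list Packet) (m : Packet) (n n' : State) (o : option Sched) :
    alg_run net L ms n -> alg_step net L n m n' o ->
    alg_run net L (ms ++ [m]) n'.

Definition deltaD (net : Network) (L : nat) (n : State) (k : Sched) : R :=
  (1 - sum_beta net L n k) +
  fold_right (fun p acc =>
     INR (cap net (fst p)) *
       (beta net L (incr k n) (fst p) (snd p) - beta net L n (fst p) (snd p)) + acc)
    0 k.

(* With K = ln L + 1 and A = L (e^(1/K) - 1), the function g_L satisfies
   g_L' <= K g_L + 1/A on both of its pieces, so a second-order expansion gives
   C (g_L(x + 1/C) - g_L(x)) <= K g_L(x) + 1/A + M/C whenever g_L(x) <= 1.
   The pairs of k* are distinct (their slots increase) and at most L in number,
   and alpha_m = 1 - S with S = sum of the beta's on k* < 1, hence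
   Delta D <= 1 + (K - 1) S + L/A + L M / C_min <= 2 K + L M / C_min,
   using L/A <= K, i.e. e^(1/K) - 1 >= 1/K. *)

From Stdlib Require Import Reals List Arith Lra Lia Sorting.
Open Scope R_scope.

Lemma exp_le_compat x y : x <= y -> exp x <= exp y.
Proof.
  intros [Hlt | ->]; [left; apply exp_increasing; exact Hlt | right; reflexivity].
Qed.

Lemma exp_sub1_le z : 0 <= z -> exp z - 1 <= z * exp z.
Proof.
  intro Hz.
  assert (Hinv : exp z * exp (- z) = 1) by (rewrite <- exp_plus, Rplus_opp_r; apply exp_0).
  assert (exp z * (1 - z) <= exp z * exp (- z)).
  { apply Rmult_le_compat_l; [left; apply exp_pos|].
    pose proof (exp_ineq1_le (- z)); lra. }
  nra.
Qed.

Lemma exp_sub1_sub_le z : 0 <= z -> exp z - 1 - z <= z ^ 2 * exp z.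
Proof.
  intro Hz. pose proof (exp_sub1_le z Hz).
  assert (z * (exp z - 1) <= z * (z * exp z)) by (apply Rmult_le_compat_l; lra).
  nra.
Qed.

Section GFunction.

Variable L : nat.
Hypothesis HL : (1 <= L)%nat.

Definition gL_rate := ln (INR L) + 1.
Definition gL_knee := 1 / gL_rate.
Definition gL_scale := INR L * (exp gL_knee - 1).
(* e/A comes from the lower piece, K e/A from crossing the knee, K^2 e^K from the upper piece. *)
Definition gL_curv := exp 1 * (1 + gL_rate) / gL_scale + gL_rate ^ 2 * exp gL_rate.

Lemma INR_L_ge1 : 1 <= INR L.
Proof. apply (le_INR 1); exact HL. Qed.

Lemma gL_rate_ge1 : 1 <= gL_rate.
Proof.
  unfold gL_rate. destruct INR_L_ge1 as [Hlt | Heq].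
  - pose proof (ln_increasing 1 _ Rlt_0_1 Hlt). rewrite ln_1 in H. lra.
  - rewrite <- Heq, ln_1. lra.
Qed.

Lemma gL_knee_bounds : 0 < gL_knee <= 1 /\ gL_knee * gL_rate = 1.
Proof.
  pose proof gL_rate_ge1. unfold gL_knee. split; [split|].
  - apply Rdiv_lt_0_compat; lra.
  - apply Rmult_le_reg_r with gL_rate; [lra|]. field_simplify; lra.
  - field. lra.
Qed.

Lemma gL_scale_pos : 0 < gL_scale.
Proof.
  pose proof INR_L_ge1. pose proof gL_knee_bounds.
  pose proof (exp_ineq1_le gL_knee). unfold gL_scale. nra.
Qed.

Lemma L_div_scale_le_rate : INR L / gL_scale <= gL_rate.
Proof.
  pose proof INR_L_ge1. destruct gL_knee_bounds as [Hc HcK].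
  pose proof (exp_ineq1_le gL_knee).
  unfold gL_scale. replace (INR L / (INR L * (exp gL_knee - 1))) with (/ (exp gL_knee - 1))
    by (field; lra).
  replace gL_rate with (/ gL_knee) by (unfold gL_knee; field; pose proof gL_rate_ge1; lra).
  apply Rinv_le_contravar; lra.
Qed.

Lemma gL_below x : x <= gL_knee -> gL L x = (exp x - 1) / gL_scale.
Proof.
  intro Hx. unfold gL; cbv zeta. fold gL_rate gL_knee gL_scale.
  destruct (Rle_dec x gL_knee); [reflexivity | contradiction].
Qed.

Lemma gL_above x : gL_knee <= x -> gL L x = exp ((x - 1) * gL_rate).
Proof.
  intros [Hlt | <-].
  - unfold gL; cbv zeta. fold gL_rate gL_knee gL_scale.
    destruct (Rle_dec x gL_knee); [lra | reflexivity].
  - (* both pieces equal [1 / L] at the knee *)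
    rewrite gL_below by lra.
    destruct gL_knee_bounds as [Hc HcK]. pose proof INR_L_ge1.
    pose proof (exp_ineq1_le gL_knee).
    replace ((gL_knee - 1) * gL_rate) with (- ln (INR L)) by (unfold gL_rate in *; lra).
    rewrite exp_Ropp, exp_ln by lra. unfold gL_scale. field. lra.
Qed.

Lemma gL_nonneg x : 0 <= x -> 0 <= gL L x.
Proof.
  intro Hx. destruct (Rle_dec x gL_knee).
  - rewrite gL_below by assumption. pose proof gL_scale_pos.
    pose proof (exp_ineq1_le x). apply Rmult_le_pos; [lra | left; apply Rinv_0_lt_compat; lra].
  - rewrite gL_above by lra. left; apply exp_pos.
Qed.

Lemma gL_incr_below x h : 0 <= x -> 0 <= h -> x + h <= gL_knee ->
  gL L (x + h) - gL L x <= h * (gL L x + 1 / gL_scale) + h ^ 2 * (exp 1 / gL_scale).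
Proof.
  intros Hx Hh Hxh. rewrite !gL_below by lra.
  pose proof gL_scale_pos. destruct gL_knee_bounds as [Hc _].
  assert (Hkey : exp x * exp h - exp x <= h * exp x + h ^ 2 * exp 1).
  { assert (exp x * (exp h - 1 - h) <= exp x * (h ^ 2 * exp h))
      by (apply Rmult_le_compat_l; [left; apply exp_pos | apply exp_sub1_sub_le; lra]).
    assert (h ^ 2 * exp (x + h) <= h ^ 2 * exp 1)
      by (apply Rmult_le_compat_l; [nra | apply exp_le_compat; lra]).
    rewrite exp_plus in *. nra. }
  rewrite exp_plus.
  replace ((exp x * exp h - 1) / gL_scale - (exp x - 1) / gL_scale)
    with ((exp x * exp h - exp x) / gL_scale) by (field; lra).
  replace (h * ((exp x - 1) / gL_scale + 1 / gL_scale) + h ^ 2 * (exp 1 / gL_scale))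
    with ((h * exp x + h ^ 2 * exp 1) / gL_scale) by (field; lra).
  apply Rmult_le_compat_r; [left; apply Rinv_0_lt_compat|]; lra.
Qed.

Lemma gL_lipschitz_below x y : 0 <= x <= y -> y <= gL_knee ->
  gL L y - gL L x <= (y - x) * exp 1 / gL_scale.
Proof.
  intros Hxy Hy. rewrite !gL_below by lra.
  pose proof gL_scale_pos. destruct gL_knee_bounds as [Hc _].
  assert (Hkey : exp y - exp x <= (y - x) * exp 1).
  { replace (exp y) with (exp x * exp (y - x)) by (rewrite <- exp_plus; f_equal; ring).
    assert (exp x * (exp (y - x) - 1) <= exp x * ((y - x) * exp (y - x)))
      by (apply Rmult_le_compat_l; [left; apply exp_pos | apply exp_sub1_le; lra]).
    assert ((y - x) * exp (x + (y - x)) <= (y - x) * exp 1)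
      by (apply Rmult_le_compat_l; [lra | apply exp_le_compat; lra]).
    rewrite exp_plus in *. nra. }
  replace ((exp y - 1) / gL_scale - (exp x - 1) / gL_scale)
    with ((exp y - exp x) / gL_scale) by (field; lra).
  apply Rmult_le_compat_r; [left; apply Rinv_0_lt_compat|]; lra.
Qed.

Lemma gL_incr_above x h : gL_knee <= x -> 0 <= h <= 1 -> gL L x <= 1 ->
  gL L (x + h) - gL L x <= h * gL_rate * gL L x + h ^ 2 * (gL_rate ^ 2 * exp gL_rate).
Proof.
  intros Hx Hh Hg1. pose proof gL_rate_ge1 as HK.
  assert (Hg0 : 0 <= gL L x) by (apply gL_nonneg; destruct gL_knee_bounds; lra).
  rewrite (gL_above (x + h)) by lra. rewrite gL_above in * by lra.
  replace ((x + h - 1) * gL_rate) with ((x - 1) * gL_rate + h * gL_rate) by ring.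
  rewrite exp_plus. set (g := exp ((x - 1) * gL_rate)) in *.
  assert (HhK : exp (h * gL_rate) - 1 - h * gL_rate <= h ^ 2 * (gL_rate ^ 2 * exp gL_rate)).
  { assert (exp (h * gL_rate) <= exp gL_rate) by (apply exp_le_compat; nra).
    pose proof (exp_sub1_sub_le (h * gL_rate) ltac:(nra)).
    assert ((h * gL_rate) ^ 2 * exp (h * gL_rate) <= (h * gL_rate) ^ 2 * exp gL_rate)
      by (apply Rmult_le_compat_l; [nra | assumption]).
    nra. }
  assert (g * (exp (h * gL_rate) - 1 - h * gL_rate)
          <= 1 * (h ^ 2 * (gL_rate ^ 2 * exp gL_rate))).
  { apply Rmult_le_compat; try lra.
    pose proof (exp_ineq1_le (h * gL_rate)); lra. }
  nra.
Qed.

Lemma gL_incr x h : 0 <= x -> 0 <= h <= 1 -> gL L x <= 1 ->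
  gL L (x + h) - gL L x <= h * (gL_rate * gL L x + 1 / gL_scale) + h ^ 2 * gL_curv.
Proof.
  intros Hx Hh Hg1.
  pose proof gL_rate_ge1 as HK. pose proof gL_scale_pos as HA.
  destruct gL_knee_bounds as [Hc _].
  pose proof (gL_nonneg x Hx) as Hg0.
  set (a := exp 1 / gL_scale). set (b := gL_rate ^ 2 * exp gL_rate).
  assert (Ha : 0 <= a) by (apply Rmult_le_pos; [left; apply exp_pos | left; apply Rinv_0_lt_compat; lra]).
  assert (Hb : 0 <= b) by (apply Rmult_le_pos; [nra | left; apply exp_pos]).
  assert (HiA : 0 < 1 / gL_scale) by (apply Rdiv_lt_0_compat; lra).
  assert (HM : gL_curv = a + gL_rate * a + b) by (unfold gL_curv, a, b; field; lra).
  assert (HKg : h * gL L x <= h * (gL_rate * gL L x)) by (apply Rmult_le_compat_l; nra).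
  assert (Hh2 : 0 <= h ^ 2) by nra.
  assert (HhA : 0 <= h * (1 / gL_scale)) by (apply Rmult_le_pos; lra).
  destruct (Rle_dec (x + h) gL_knee) as [Hlow | Hhigh].
  - pose proof (gL_incr_below x h Hx (proj1 Hh) Hlow) as Hinc; fold a in Hinc.
    assert (h ^ 2 * a <= h ^ 2 * gL_curv) by (apply Rmult_le_compat_l; nra).
    lra.
  - destruct (Rle_dec gL_knee x) as [Habove | Hcross].
    + pose proof (gL_incr_above x h Habove Hh Hg1) as Hinc; fold b in Hinc.
      assert (h ^ 2 * b <= h ^ 2 * gL_curv) by (apply Rmult_le_compat_l; nra).
      lra.
    + (* split [x, x + h] at the knee c into [x, c] and [c, x + h] *)
      set (h1 := gL_knee - x). set (h2 := x + h - gL_knee).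
      assert (HhS : h = h1 + h2) by (unfold h1, h2; ring).
      assert (Hh1 : 0 <= h1 <= 1) by (unfold h1; lra).
      assert (Hh2' : 0 <= h2 <= 1) by (unfold h2; lra).
      pose proof (gL_incr_below x h1 Hx (proj1 Hh1) ltac:(unfold h1; lra)) as Hlo.
      fold a in Hlo.
      replace (x + h1) with gL_knee in Hlo by (unfold h1; ring).
      pose proof (gL_lipschitz_below x gL_knee ltac:(lra) ltac:(lra)) as Hlip.
      fold h1 in Hlip.
      assert (Hgc : gL L gL_knee <= 1).
      { rewrite gL_above by lra.
        apply Rle_trans with (exp 0); [apply exp_le_compat; nra | rewrite exp_0; lra]. }
      pose proof (gL_incr_above gL_knee h2 ltac:(lra) Hh2' Hgc) as Hhi.
      fold b in Hhi.
      replace (gL_knee + h2) with (x + h) in Hhi by (unfold h2; ring).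
      assert (Hlip' : h2 * gL_rate * (gL L gL_knee - gL L x) <= h2 * gL_rate * (h1 * a)).
      { apply Rmult_le_compat_l; [nra|]. unfold a; lra. }
      assert (h1 * gL L x <= h1 * (gL_rate * gL L x)) by (apply Rmult_le_compat_l; nra).
      assert (h1 ^ 2 * a <= h ^ 2 * a) by (apply Rmult_le_compat_r; nra).
      assert (h1 * h2 * (gL_rate * a) <= h ^ 2 * (gL_rate * a))
        by (apply Rmult_le_compat_r; nra).
      assert (h2 ^ 2 * b <= h ^ 2 * b) by (apply Rmult_le_compat_r; nra).
      assert (h2 * (gL_rate * gL L x) <= h * (gL_rate * gL L x) - h1 * (gL_rate * gL L x))
        by (rewrite HhS; lra).
      rewrite HM. nra.
Qed.

Lemma gL_curv_nonneg : 0 <= gL_curv.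
Proof.
  pose proof gL_rate_ge1. pose proof gL_scale_pos.
  pose proof (exp_pos 1). pose proof (exp_pos gL_rate).
  unfold gL_curv. apply Rplus_le_le_0_compat.
  - apply Rmult_le_pos; [nra | left; apply Rinv_0_lt_compat; lra].
  - apply Rmult_le_pos; nra.
Qed.

Lemma gL_incr_scaled C Cmin x : 1 <= Cmin <= C -> 0 <= x -> gL L x <= 1 ->
  C * (gL L (x + 1 / C) - gL L x) <= gL_rate * gL L x + 1 / gL_scale + gL_curv / Cmin.
Proof.
  intros HC Hx Hg1. pose proof gL_curv_nonneg.
  assert (Hh : 0 <= 1 / C <= 1).
  { split; [apply Rmult_le_pos; [lra | left; apply Rinv_0_lt_compat; lra]|].
    unfold Rdiv; rewrite Rmult_1_l, <- Rinv_1. apply Rinv_le_contravar; lra. }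
  pose proof (gL_incr x (1 / C) Hx Hh Hg1) as Hinc.
  apply Rmult_le_compat_l with (r := C) in Hinc; [|lra].
  assert (HMC : gL_curv / C <= gL_curv / Cmin)
    by (apply Rmult_le_compat_l; [lra | apply Rinv_le_contravar; lra]).
  replace (C * (1 / C * (gL_rate * gL L x + 1 / gL_scale) + (1 / C) ^ 2 * gL_curv))
    with (gL_rate * gL L x + 1 / gL_scale + gL_curv / C) in Hinc
    by (pose proof gL_scale_pos; field; lra).
  lra.
Qed.

End GFunction.

Definition rsum {A : Type} (f : A -> R) (s : list A) : R :=
  fold_right (fun p acc => f p + acc) 0 s.

Lemma rsum_le_affine {A : Type} (f g : A -> R) (a c : R) (s : list A) :
  (forall p, In p s -> f p <= a * g p + c) ->
  rsum f s <= a * rsum g s + INR (length s) * c.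
Proof.
  induction s as [|p s IH]; intro H; unfold rsum in *; cbn [fold_right length].
  { simpl; lra. }
  rewrite S_INR. pose proof (H p (or_introl eq_refl)).
  pose proof (IH (fun q Hq => H q (or_intror Hq))). lra.
Qed.

Lemma rsum_nonneg {A : Type} (f : A -> R) (s : list A) :
  (forall p, In p s -> 0 <= f p) -> 0 <= rsum f s.
Proof.
  induction s as [|q s IH]; intro Hf; simpl; [lra|].
  pose proof (Hf q (or_introl eq_refl)).
  pose proof (IH (fun r Hr => Hf r (or_intror Hr))). lra.
Qed.

Lemma rsum_ge_term {A : Type} (f : A -> R) (s : list A) :
  (forall p, In p s -> 0 <= f p) -> forall p, In p s -> f p <= rsum f s.
Proof.
  induction s as [|q s IH]; intros Hf p Hp; [destruct Hp|].
  assert (Hf' : forall r, In r s -> 0 <= f r) by (intros r Hr; apply Hf; right; exact Hr).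
  simpl. destruct Hp as [<- | Hp].
  - pose proof (rsum_nonneg f s Hf'); lra.
  - pose proof (Hf q (or_introl eq_refl)). pose proof (IH Hf' p Hp); lra.
Qed.

Lemma nth_increasing_NoDup {A : Type} (f : A -> nat) (d : A) (k : list A) :
  (forall i, (S i < length k)%nat -> (f (nth i k d) < f (nth (S i) k d))%nat) ->
  NoDup k.
Proof.
  intro H.
  assert (Hsorted : StronglySorted (fun p q => (f p < f q)%nat) k).
  { apply Sorted_StronglySorted; [intros x y z; lia|].
    induction k as [|a k IH]; constructor.
    - apply IH. intros i Hi. apply (H (S i)). simpl; lia.
    - destruct k as [|b k]; constructor. apply (H 0%nat). simpl; lia. }
  clear H. induction Hsorted as [|a k _ IH Hall]; constructor; [|exact IH].
  intro Ha. rewrite Forall_forall in Hall. specialize (Hall a Ha). lia.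
Qed.

Lemma beta_incr_NoDup net L n k l t : NoDup k -> In (l, t) k ->
  beta net L (incr k n) l t
  = gL L (INR (n l t) / INR (cap net l) + 1 / INR (cap net l)).
Proof.
  intros Hnd Hin. unfold beta, incr.
  rewrite (proj1 (NoDup_count_occ' pair_eq_dec k) Hnd _ Hin), plus_INR.
  f_equal. simpl. unfold Rdiv. ring.
Qed.

Lemma deltaD_le L net n k Cmin : (1 <= L)%nat -> (1 <= Cmin)%nat -> NoDup k ->
  (forall p, In p k -> (Cmin <= cap net (fst p))%nat) ->
  sum_beta net L n k < 1 ->
  deltaD net L n k
  <= gL_rate L + INR (length k) * (1 / gL_scale L + gL_curv L / INR Cmin).
Proof.
  intros HL HC Hnd Hcap HS.
  set (b := fun p : nat * nat => beta net L n (fst p) (snd p)).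
  assert (Hx0 : forall l t, In (l, t) k -> 0 <= INR (n l t) / INR (cap net l)).
  { intros l t Hp. specialize (Hcap _ Hp). cbn [fst] in Hcap.
    apply Rmult_le_pos; [apply pos_INR|].
    left; apply Rinv_0_lt_compat, lt_0_INR; lia. }
  assert (Hb0 : forall p, In p k -> 0 <= b p)
    by (intros [l t] Hp; apply gL_nonneg; [exact HL | exact (Hx0 l t Hp)]).
  assert (Hb1 : forall p, In p k -> b p <= 1).
  { intros p Hp. pose proof (rsum_ge_term b k Hb0 p Hp).
    change (rsum b k < 1) in HS. lra. }
  assert (Hsum : rsum (fun p => INR (cap net (fst p)) *
                   (beta net L (incr k n) (fst p) (snd p) - b p)) k
                 <= gL_rate L * rsum b k
                    + INR (length k) * (1 / gL_scale L + gL_curv L / INR Cmin)).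
  { apply rsum_le_affine. intros [l t] Hp. cbn [fst snd].
    rewrite beta_incr_NoDup by assumption. unfold b, beta; cbn [fst snd].
    rewrite <- Rplus_assoc.
    apply gL_incr_scaled; [exact HL | | exact (Hx0 l t Hp) | exact (Hb1 _ Hp)].
    specialize (Hcap _ Hp); cbn [fst] in Hcap.
    split; [apply (le_INR 1) | apply le_INR]; lia. }
  change (sum_beta net L n k) with (rsum b k) in HS.
  unfold deltaD. change (sum_beta net L n k) with (rsum b k).
  change (fold_right _ 0 k) with (rsum (fun p => INR (cap net (fst p)) *
            (beta net L (incr k n) (fst p) (snd p) - b p)) k).
  pose proof (gL_rate_ge1 L HL).
  (* [1 - S + K S = 1 + (K - 1) S <= K] because [S < 1] *)
  assert ((gL_rate L - 1) * rsum b k <= gL_rate L - 1) by nra.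
  lra.
Qed.

Lemma alg_step_sched_inv net L n m n' k :
  alg_step net L n m n' (Some k) ->
  valid_schedule net m k /\ sum_beta net L n k < 1.
Proof. intro H; inversion H; subst; split; [assumption | lra]. Qed.

Theorem lemma3 :
  forall L : nat, (1 <= L)%nat ->
  exists B : R,
  forall (net : Network) (packets : list Packet) (Cmin : nat),
    (forall l, In l (links net) -> (1 <= cap net l)%nat) ->
    (exists l, In l (links net) /\ cap net l = Cmin) ->
    (forall l, In l (links net) -> (Cmin <= cap net l)%nat) ->
    (forall m k, In m packets -> valid_schedule net m k -> (length k <= L)%nat) ->
    forall (ms : list Packet) (m : Packet) (rest : list Packet) (n : State) (k : Sched),
      packets = ms ++ m :: rest ->
      alg_run net L ms n ->
      alg_step net L n m (incr k n) (Some k) ->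
      deltaD net L n k <= 2 * (ln (INR L) + 1) + B / INR Cmin.
Proof.
  intros L HL. exists (INR L * gL_curv L).
  (* the bound holds from any state *)
  intros net packets Cmin Hcap1 [l0 [Hl0 Hl0C]] HCmin Hlen ms m rest n k -> _ Hstep.
  destruct (alg_step_sched_inv _ _ _ _ _ _ Hstep) as [Hvalid HS].
  assert (Hk : (length k <= L)%nat)
    by (apply (Hlen m); [apply in_or_app; right; left |]; auto).
  destruct Hvalid as (_ & Hlinks & _ & _ & _ & _ & _ & Hinc & _).
  rewrite Forall_forall in Hlinks.
  assert (HC : (1 <= Cmin)%nat) by (rewrite <- Hl0C; auto).
  pose proof (deltaD_le L net n k Cmin HL HC (nth_increasing_NoDup snd _ k Hinc)
                (fun p Hp => HCmin _ (Hlinks p Hp)) HS) as HD.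
  pose proof (L_div_scale_le_rate L HL).
  pose proof (gL_curv_nonneg L HL). pose proof (gL_scale_pos L HL).
  assert (HCr : 0 < INR Cmin) by (apply lt_0_INR; lia).
  assert (HkL : INR (length k) <= INR L) by (apply le_INR; exact Hk).
  assert (HlenA : INR (length k) * (1 / gL_scale L) <= INR L / gL_scale L)
    by (unfold Rdiv; rewrite Rmult_1_l;
        apply Rmult_le_compat_r; [left; apply Rinv_0_lt_compat |]; lra).
  assert (HlenM : INR (length k) * (gL_curv L / INR Cmin) <= INR L * gL_curv L / INR Cmin).
  { unfold Rdiv. rewrite Rmult_assoc. apply Rmult_le_compat_r; [|exact HkL].
    apply Rmult_le_pos; [lra | left; apply Rinv_0_lt_compat; lra]. }
  unfold gL_rate in *. lra.
Qed.
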